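(* Let $\mathcal{C}$ be an ordinary smooth projective curve of genus $g\ge1$ over $\mathbb{F}_q$. Then all of its Frobenius angles $\vartheta_1,\ldots,\vartheta_g$ are irrational.
   Context: Let $\mathcal{C}$ be a smooth projective curve of genus $g\ge1$ over the finite field $\mathbb{F}_q$ ($q$ a power of the prime $p$). The numerator of its zeta function is $P(T)=\prod_{j=1}^{2g}(1-\tau_j T)\in\mathbb{Z}[T]$, where the Frobenius eigenvalues $\tau_j$ satisfy $|\tau_j|=q^{1/2}$ and $\tau_{j+g}=\overline{\tau_j}$ for $j=1,\ldots,g$. Write $\tau_j = q^{1/2}e^{\pi i \vartheta_j}$ and $\tau_{j+g}=q^{1/2}e^{-\pi i\vartheta_j}$ with $\vartheta_j\in[0,1]$; these $\vartheta_j$ ($j=1,\ldots,g$) are the Frobenius angles. Fixing an embedding $\overline{\mathbb{Q}}\hookrightarrow\overline{\mathbb{Q}}_p$, the curve is ordinary if at least half of $\tau_1,\ldots,\tau_{2g}$ are $p$-adic units. *)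

From HB Require Import structures.
From mathcomp Require Import all_boot all_order all_algebra all_field.
Set Implicit Arguments. Unset Strict Implicit. Unset Printing Implicit Defensive.
Import Order.TTheory GRing.Theory Num.Theory.
Local Open Scope ring_scope.

(* The fixed embedding Qbar -> Qbar_p is encoded by the valuation ring it
   induces on Qbar = algC: O = { x | |x|_p <= 1 }.  Such a subring O is a
   valuation ring of algC (x in O or x^-1 in O for x <> 0) in which p is not
   a unit; conversely every such valuation ring comes from an embedding. *)
Definition padic_valring (p : nat) (O : pred algC) : Prop :=
  [/\ 1 \in O,
      {in O &, forall x y, x - y \in O},
      {in O &, forall x y, x * y \in O},
      (forall x : algC, x != 0 -> x \in O \/ x^-1 \in O)
    & (p%:R : algC)^-1 \notin O].

Definition padic_unit (O : pred algC) (x : algC) : Prop :=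
  [/\ x != 0, x \in O & x^-1 \in O].

(* Frobenius eigenvalues tau_1..tau_2g from tau_1..tau_g: tau_{j+g} = conj tau_j *)
Definition frob_eig (g : nat) (tau : 'I_g -> algC) (j : 'I_(g + g)) : algC :=
  match split j with
  | inl i => tau i
  | inr i => (tau i)^*
  end.

Definition zeta_num (g : nat) (tau : 'I_g -> algC) : {poly algC} :=
  \prod_(j < g + g) (1 - frob_eig tau j *: 'X).

(* Frobenius angle theta in [0,1] of tau = q^(1/2) e^(pi i theta) is rational
   iff theta = a/b (a,b nat, b > 0), i.e. iff (tau / q^(1/2))^b = e^(pi i a)
   = (-1)^a for some a, b with b > 0. *)
Definition frob_angle_rational (q : nat) (t : algC) : Prop :=
  exists a b : nat, (0 < b)%N /\ (t / sqrtC q%:R) ^+ b = (-1) ^+ a.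

Definition ordinary_frob (g : nat) (O : pred algC) (tau : 'I_g -> algC) : Prop :=
  exists S : {set 'I_(g + g)},
    (g <= #|S|)%N /\ (forall j, j \in S -> padic_unit O (frob_eig tau j)).

From HB Require Import structures.
From mathcomp Require Import all_boot all_order all_algebra all_field.
Set Implicit Arguments.
Unset Strict Implicit.
Unset Printing Implicit Defensive.

Import Order.TTheory GRing.Theory Num.Theory.
Local Open Scope ring_scope.

(* Since [tau * tau^* = q] is not a p-adic unit, at most one eigenvalue of each
   conjugate pair is a unit; an ordinary curve has at least [g] units among its
   [2g] eigenvalues, so each pair contains exactly one, in particular [tau_j] or
   its conjugate is a unit.  If the angle of [tau_j] were rational then
   [tau_j^(2b) = q^b] for some [b > 0], and a power of a unit cannot be the
   non-unit [q^b]. *)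

Section PadicValuationRing.
Variables (p : nat) (O : pred algC).
Hypothesis valO : padic_valring p O.

Lemma valring1 : 1 \in O.
Proof. by case: valO. Qed.

Lemma valringB : {in O &, forall x y, x - y \in O}.
Proof. by case: valO. Qed.

Lemma valringM : {in O &, forall x y, x * y \in O}.
Proof. by case: valO. Qed.

Lemma valring0 : 0 \in O.
Proof. by rewrite -(subrr 1) valringB ?valring1. Qed.

Lemma valringD : {in O &, forall x y, x + y \in O}.
Proof.
move=> x y Ox Oy; rewrite -[y]opprK valringB // -sub0r valringB //.
exact: valring0.
Qed.

Lemma valring_natr n : n%:R \in O.
Proof.
elim: n => [|n IHn]; first exact: valring0.
by rewrite -addn1 natrD valringD ?valring1.
Qed.

Lemma valringX x n : x \in O -> x ^+ n \in O.
Proof.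
move=> Ox; elim: n => [|n IHn]; first by rewrite expr0 valring1.
by rewrite exprS valringM.
Qed.

Lemma valring_char_neq0 : (p%:R : algC) != 0.
Proof.
apply: contraTneq valring0 => p0; case: valO => _ _ _ _.
by rewrite p0 invr0.
Qed.

Lemma padic_unitM x y :
  padic_unit O x -> padic_unit O y -> padic_unit O (x * y).
Proof.
move=> [x0 Ox Oxi] [y0 Oy Oyi].
by split; rewrite ?mulf_neq0 ?invfM ?valringM.
Qed.

Lemma padic_unitX x n : padic_unit O x -> padic_unit O (x ^+ n).
Proof.
move=> Ux; elim: n => [|n IHn].
  by rewrite expr0; split; rewrite ?oner_eq0 ?invr1 ?valring1.
by rewrite exprS; apply: padic_unitM.
Qed.

Lemma not_padic_unit_charX n : (0 < n)%N -> ~ padic_unit O (p%:R ^+ n).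
Proof.
move=> n_gt0 [_ _ Opni]; case: valO => _ _ _ _ /negP; apply.
have p0 := valring_char_neq0.
have -> : (p%:R : algC)^-1 = p%:R ^+ n.-1 * (p%:R ^+ n)^-1.
  by rewrite -{2}(prednK n_gt0) exprS invfM mulrCA mulfV ?mulr1 // expf_neq0.
by rewrite valringM // -natrX valring_natr.
Qed.

End PadicValuationRing.

Definition pair_index (g : nat) (x : 'I_(g + g)) : 'I_g :=
  match split x with inl i => i | inr i => i end.

Lemma pair_indexP (g : nat) (x : 'I_(g + g)) :
  x = lshift g (pair_index x) \/ x = rshift g (pair_index x).
Proof.
rewrite -[x in pair_index x]splitK /pair_index -{1 3}(splitK x).
by case: (split x) => i; rewrite unsplitK; [left | right].
Qed.

Lemma half_set_meets_pairs (g : nat) (S : {set 'I_(g + g)}) :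
  (g <= #|S|)%N ->
  (forall i, ~~ ((lshift g i \in S) && (rshift g i \in S))) ->
  forall i, (lshift g i \in S) || (rshift g i \in S).
Proof.
move=> card_S no_pair j; apply/negPn/negP => /norP [nlj nrj].
have inj_S : {in S &, injective (@pair_index g)}.
  move=> x y Sx Sy eq_xy.
  case: (pair_indexP x) => ex; case: (pair_indexP y) => ey;
    rewrite ex ey eq_xy //; rewrite ex eq_xy in Sx; rewrite ey in Sy;
    by move: (no_pair (pair_index y)); rewrite Sx Sy.
have sub_S : (@pair_index g) @: S \subset [set~ j].
  apply/subsetP => _ /imsetP [x Sx ->]; rewrite !inE.
  by apply/eqP => xj; case: (pair_indexP x) Sx => ->; rewrite xj; apply/negP.
have := subset_leq_card sub_S; rewrite card_in_imset // cardsC1 card_ord.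
by move/(leq_trans card_S); rewrite leqNgt ltn_predL (leq_ltn_trans _ (ltn_ord j)).
Qed.

Lemma frob_eig_lshift (g : nat) (tau : 'I_g -> algC) i :
  frob_eig tau (lshift g i) = tau i.
Proof. by rewrite /frob_eig (unsplitK (inl _ i)). Qed.

Lemma frob_eig_rshift (g : nat) (tau : 'I_g -> algC) i :
  frob_eig tau (rshift g i) = (tau i)^*.
Proof. by rewrite /frob_eig (unsplitK (inr _ i)). Qed.

Lemma ordinary_frob_pair_unit (p g : nat) (O : pred algC) (tau : 'I_g -> algC) :
  padic_valring p O -> ordinary_frob O tau ->
  (forall i, ~ padic_unit O (tau i * (tau i)^*)) ->
  forall i, padic_unit O (tau i) \/ padic_unit O (tau i)^*.
Proof.
move=> valO [S [card_S unit_S]] nonunit_pair i.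
have no_pair i' : ~~ ((lshift g i' \in S) && (rshift g i' \in S)).
  apply/negP => /andP [/unit_S + /unit_S].
  rewrite frob_eig_lshift frob_eig_rshift => Ul Ur.
  exact: nonunit_pair _ (padic_unitM valO Ul Ur).
case/orP: (half_set_meets_pairs card_S no_pair i) => /unit_S.
  by rewrite frob_eig_lshift; left.
by rewrite frob_eig_rshift; right.
Qed.

Lemma frob_angle_rational_pow (q : nat) (t : algC) :
  (0 < q)%N -> frob_angle_rational q t ->
  exists2 b : nat, (0 < b)%N & t ^+ (2 * b) = q%:R ^+ b.
Proof.
move=> q_gt0 [a [b [b_gt0 tb]]]; exists b => //.
have s0 : sqrtC (q%:R : algC) != 0 by rewrite sqrtC_eq0 pnatr_eq0 -lt0n.
have : (t / sqrtC q%:R) ^+ (2 * b) = 1 by rewrite mulnC exprM tb sqrr_sign.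
rewrite exprMn exprVn => /(canRL (mulfVK _)) ->; last by rewrite expf_neq0.
by rewrite mul1r exprM sqrtCK.
Qed.

Theorem lemma8 (p k q g : nat) (tau : 'I_g -> algC) (O : pred algC) :
  prime p -> (0 < k)%N -> q = (p ^ k)%N -> (1 <= g)%N ->
  zeta_num tau \is a polyOver Num.int ->
  (forall j : 'I_g, `|tau j| = sqrtC q%:R) ->
  (forall j : 'I_g, 0 <= 'Im (tau j)) ->
  padic_valring p O ->
  ordinary_frob O tau ->
  forall j : 'I_g, ~ frob_angle_rational q (tau j).
Proof.
move=> p_prime k_gt0 -> _ _ abs_tau _ valO ord j rat_j.
have q_gt0 : (0 < p ^ k)%N by rewrite expn_gt0 prime_gt0.
have [b b_gt0 tau_pow] := frob_angle_rational_pow q_gt0 rat_j.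
have kb_gt0 : (0 < k * b)%N by rewrite muln_gt0 k_gt0.
have q_pow : ((p ^ k)%N%:R : algC) ^+ b = p%:R ^+ (k * b) by rewrite natrX exprM.
have pair_norm i : tau i * (tau i)^* = p%:R ^+ k.
  by rewrite -normCK abs_tau sqrtCK natrX.
have nonunit_pair i : ~ padic_unit O (tau i * (tau i)^*).
  by rewrite pair_norm; exact: (not_padic_unit_charX valO k_gt0).
have conj_tau_pow : (tau j)^* ^+ (2 * b) = (p ^ k)%:R ^+ b.
  by rewrite -rmorphXn tau_pow rmorphXn /= conjC_nat.
case: (ordinary_frob_pair_unit valO ord nonunit_pair j);
  move=> /(padic_unitX valO (2 * b));
  rewrite ?tau_pow ?conj_tau_pow q_pow; exact: (not_padic_unit_charX valO kb_gt0).
Qed.
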